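(* Let $F$ be the field of fractions of $R$, let $t_1,t_2$ be independent indeterminates, and work in $\mathrm{BB}_2\otimes_R F(t_1,t_2)$. Put $R_1(t)=-\delta t(t+q\lambda^{-1})+(t-1)(t+q\lambda^{-1})X_1+\delta t(t-1)e_1$ and $K(t)=\bigl(t^2q_1(1-t^2)^{-1}+Y\bigr)f_1(t)$, where $f_1$ is an arbitrary function with values in $F(t_1,t_2)$. Then the reflection equation $R_1(t_1/t_2)K(t_1)R_1(t_1t_2)K(t_2)=K(t_2)R_1(t_1t_2)K(t_1)R_1(t_1/t_2)$ holds.
   Context: $R$ is an integral domain with units $q,\lambda,x,q_0$ and elements $A,q_1$; $\delta=q-q^{-1}$; standing assumptions $x\delta=\delta-\lambda+\lambda^{-1}$, $q_0=q^{-1}$, $A(1-q_0\lambda)=q_1x$. $\mathrm{BB}_2$ is the unital $R$-algebra generated by invertible $Y,X_1$ and $e_1$ with relations $X_1e_1=e_1X_1=\lambda e_1$, $e_1^2=xe_1$, $X_1^{-1}=X_1-\delta+\delta e_1$, $X_1^2=1+\delta X_1-\delta\lambda e_1$, $X_1YX_1Y=YX_1YX_1$, $Y^2=q_1Y+q_0$, $YX_1Ye_1=e_1$, $e_1Ye_1=Ae_1$; it is assumed that $e_1\ne0$ with $re_1=0\Rightarrow r=0$ for $r\in R$, and $e_1,Ye_1$ linearly independent. *)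

From HB Require Import structures.
From mathcomp Require Import all_boot all_order all_algebra fraction.
Set Implicit Arguments. Unset Strict Implicit. Unset Printing Implicit Defensive.
Import GRing.Theory.
Local Open Scope ring_scope.

(* The field F(t1,t2), realised as the fraction field of R[t1][t2]
   ( = Frac(R[t1,t2]) = F(t1,t2) with F = Frac R ). *)
Definition Kt (R : idomainType) : fieldType := {fraction {poly {poly R}}}.

Definition embR (R : idomainType) (c : R) : Kt R := FracField.tofrac (c%:P%:P).

Definition t1 (R : idomainType) : Kt R := FracField.tofrac (('X : {poly R})%:P).
Definition t2 (R : idomainType) : Kt R := FracField.tofrac ('X : {poly {poly R}}).

Definition R1 (K : fieldType) (B : algType K) (q lam : K) (X1 e1 : B) (t : K) : B :=
  let d := q - q^-1 in
  (- d * t * (t + q * lam^-1))%:A + ((t - 1) * (t + q * lam^-1)) *: X1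
  + (d * t * (t - 1)) *: e1.

Definition Kmat (K : fieldType) (B : algType K) (q1 : K) (Y : B) (f1 : K -> K) (t : K) : B :=
  f1 t *: ((t ^+ 2 * q1 / (1 - t ^+ 2))%:A + Y).

From HB Require Import structures.
From mathcomp Require Import all_boot all_order all_algebra fraction.
From mathcomp Require Import ring ssrAC.
Import GRing.Theory.
Local Open Scope ring_scope.

Set Implicit Arguments. Unset Strict Implicit. Unset Printing Implicit Defensive.

(* The twelve words 1, E, EY, X, XY, XYX, XYXY, Y, YE, YEY, YX, YXY span a
   subspace containing 1 and stable under right multiplication by X, Y and E:
   besides the quadratic relations this uses Y X Y E = E and its mirror
   E Y X Y = E, which follows from the braid relation because Y X Y X commutes
   with X, hence with E, a polynomial in X.  So both sides of the reflection
   equation are combinations of these words whose coefficients are obtained by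
   explicit linear recursions, and the equation reduces to twelve identities
   between rational functions of q, lambda, q_1, t_1, t_2 once x and A are
   eliminated.  When q = q^-1 the element X is an involution, R_1(t) is a
   multiple of X and the equation is the braid relation. *)

Section QuadraticY.
Variables (K : fieldType) (B : algType K) (q q1 : K) (Y : B).
Hypothesis q_neq0 : q != 0.
Hypothesis Y_sq : Y * Y = q1 *: Y + (q^-1)%:A.
Local Notation Yinv := (q *: Y - (q * q1)%:A).

Lemma mulY_Yinv : Y * Yinv = 1.
Proof.
by rewrite mulrBr -scalerAr Y_sq mulr_algr scalerDr !scalerA mulfV // scale1r addrAC subrr add0r.
Qed.

Lemma mulYinv_Y : Yinv * Y = 1.
Proof.
by rewrite mulrBl -scalerAl Y_sq mulr_algl scalerDr !scalerA mulfV // scale1r addrAC subrr add0r.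
Qed.

Lemma mulXYE (X E : B) : Y * X * Y * E = E -> X * Y * E = q *: (Y * E) - (q * q1) *: E.
Proof.
move=> YXYE; transitivity (Yinv * (Y * X * Y * E)).
  by rewrite !mulrA mulYinv_Y mul1r.
by rewrite YXYE mulrBl -scalerAl mulr_algl.
Qed.

Lemma mulEYX (X E : B) : E * Y * X * Y = E -> E * Y * X = q *: (E * Y) - (q * q1) *: E.
Proof.
move=> EYXY; transitivity (E * Y * X * Y * Yinv).
  by rewrite -[RHS]mulrA mulY_Yinv mulr1.
by rewrite EYXY mulrBr -scalerAr mulr_algr.
Qed.

End QuadraticY.

Section BraidTwist.
Variables (K : fieldType) (B : algType K) (lam d x : K) (X Y E : B).
Hypothesis d_neq0 : d != 0.
Hypothesis lam_neq0 : lam != 0.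
Hypothesis X_sq : X * X = 1 + d *: X - (d * lam) *: E.
Hypothesis XE : X * E = lam *: E.
Hypothesis EX : E * X = lam *: E.
Hypothesis EE : E * E = x *: E.
Hypothesis x_d : x * d = d - lam + lam^-1.
Hypothesis X_inv : X * (X - d%:A + d *: E) = 1.
Hypothesis braid : X * Y * X * Y = Y * X * Y * X.
Hypothesis YXYE : Y * X * Y * E = E.

Lemma E_polyX : E = (d * lam)^-1 *: (1 + d *: X - X * X).
Proof.
by rewrite X_sq opprB addrC subrK scalerA mulVf ?scale1r ?mulf_neq0.
Qed.

Lemma commute_XE (Z : B) : Z * X = X * Z -> Z * E = E * Z.
Proof.
move=> ZX; have ZXX : Z * (X * X) = X * X * Z by rewrite mulrA ZX -mulrA ZX mulrA.
rewrite E_polyX -scalerAl -scalerAr !mulrDr !mulrDl !mulrN !mulNr.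
by rewrite -scalerAl -scalerAr mulr1 mul1r ZX ZXX.
Qed.

Lemma mulEYXY : E * Y * X * Y = E.
Proof.
pose Z := Y * X * Y * X.
have ZE : Z * E = E * Z by apply: commute_XE; rewrite /Z !mulrA -braid.
have ZE_lam : Z * E = lam *: E by rewrite /Z -mulrA XE -scalerAr YXYE.
have lam_x : lam * (lam - d + d * x) = 1 by rewrite [d * x]mulrC x_d; field.
have EZ : E * Y * X * Y * X = E * Z by rewrite /Z !mulrA.
rewrite -[LHS]mulr1 -X_inv mulrA EZ -ZE ZE_lam -scalerAl !mulrDr mulrN mulr_algr -scalerAr EX EE.
by rewrite !scalerA -scalerBl -scalerDl scalerA lam_x scale1r.
Qed.

End BraidTwist.

Section WordSpan.
Variables (K : fieldType) (B : algType K) (q q1 lam x A d : K) (X Y E : B).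
Hypothesis q_neq0 : q != 0.
Hypothesis Y_sq : Y * Y = q1 *: Y + (q^-1)%:A.
Hypothesis X_sq : X * X = 1 + d *: X - (d * lam) *: E.
Hypothesis XE : X * E = lam *: E.
Hypothesis EX : E * X = lam *: E.
Hypothesis EE : E * E = x *: E.
Hypothesis EYE : E * Y * E = A *: E.
Hypothesis braid : X * Y * X * Y = Y * X * Y * X.
Hypothesis YXYE : Y * X * Y * E = E.
Hypothesis EYXY : E * Y * X * Y = E.

Definition word (n : nat) : B :=
  match n with
  | 0 => 1 | 1 => E | 2 => E * Y | 3 => X | 4 => X * Y | 5 => X * Y * X
  | 6 => X * Y * X * Y | 7 => Y | 8 => Y * E | 9 => Y * E * Y | 10 => Y * X
  | 11 => Y * X * Y | _ => 0
  end.

Definition wcomb (v : nat -> K) : B := \sum_(j < 12) v j *: word j.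

Definition basisv (i j : nat) : K := if eqn i j then 1 else 0.

(* The indices below carry %N: under ring_scope a bare numeral of type nat
   elaborates to [1 *+ n], which blocks the reduction of the matches. *)
Definition actX (v : nat -> K) (j : nat) : K :=
  match j with
  | 0 => v 3%N
  | 1 => lam * v 1%N - q * q1 * v 2%N - d * lam * v 3%N + d * lam * q * q1 * v 5%N - d * lam * v 6%N
  | 2 => q * v 2%N
  | 3 => v 0%N + d * v 3%N
  | 4 => v 5%N
  | 5 => v 4%N + d * v 5%N
  | 6 => d * v 6%N + v 11%N
  | 7 => v 10%N
  | 8 => - (d * lam * q) * v 5%N + lam * v 8%N - q * q1 * v 9%N - d * lam * v 10%N
  | 9 => q * v 9%N
  | 10 => v 7%N + d * v 10%N
  | 11 => v 6%N
  | _ => 0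
  end.

Definition actY (v : nat -> K) (j : nat) : K :=
  match j with
  | 0 => q^-1 * v 7%N
  | 1 => q^-1 * v 2%N
  | 2 => v 1%N + q1 * v 2%N
  | 3 => q^-1 * v 4%N
  | 4 => v 3%N + q1 * v 4%N
  | 5 => q^-1 * v 6%N
  | 6 => v 5%N + q1 * v 6%N
  | 7 => v 0%N + q1 * v 7%N
  | 8 => q^-1 * v 9%N
  | 9 => v 8%N + q1 * v 9%N
  | 10 => q^-1 * v 11%N
  | 11 => v 10%N + q1 * v 11%N
  | _ => 0
  end.

Definition actE (v : nat -> K) (j : nat) : K :=
  match j with
  | 1 => v 0%N + x * v 1%N + A * v 2%N + lam * v 3%N - q * q1 * v 4%N - lam * q * q1 * v 5%N
         + lam * v 6%N + v 11%N
  | 8 => q * v 4%N + lam * q * v 5%N + v 7%N + x * v 8%N + A * v 9%N + lam * v 10%N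
  | _ => 0
  end.

Ltac expand_row :=
  rewrite /wcomb; case=> [|[|[|[|[|[|[|[|[|[|[|[|i]]]]]]]]]]]] // _;
  rewrite !big_ord_recl big_ord0 /= /basisv /=;
  rewrite ?mulr0 ?mulr1 ?oppr0 ?add0r ?addr0 ?subr0;
  rewrite ?scale0r ?add0r ?addr0 ?scale1r ?scaleNr.

Lemma word_mulX : forall i, (i < 12)%N -> word i * X = wcomb (actX (basisv i)).
Proof.
have XYE := mulXYE q_neq0 Y_sq YXYE; have EYX := mulEYX q_neq0 Y_sq EYXY.
expand_row.
- exact: mul1r.
- exact: EX.
- by rewrite EYX addrC.
- by rewrite X_sq -addrA [d *: X + _]addrC.
- by [].
- rewrite -mulrA X_sq mulrBr mulrDr mulr1 -!scalerAr XYE scalerBr !scalerA opprB.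
  by rewrite !mulrA !addrA [LHS](ACl (3*1*2*4)).
- rewrite braid -mulrA X_sq mulrBr mulrDr mulr1 -!scalerAr YXYE -braid.
  by rewrite !addrA [LHS](ACl (3*2*1)).
- by [].
- by rewrite -mulrA EX -scalerAr.
- by rewrite -2!mulrA (mulrA E) EYX mulrBr -!scalerAr !mulrA addrC.
- by rewrite -mulrA X_sq mulrBr mulrDr mulr1 -!scalerAr !addrA [LHS](ACl (1*3*2)).
- by rewrite braid.
Qed.

Lemma word_mulY : forall i, (i < 12)%N -> word i * Y = wcomb (actY (basisv i)).
Proof.
expand_row.
all: first [ exact: mul1r | done | by rewrite Y_sq addrC
           | by rewrite -mulrA Y_sq mulrDr -scalerAr mulr_algr addrC ].
Qed.

Lemma word_mulE : forall i, (i < 12)%N -> word i * E = wcomb (actE (basisv i)).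
Proof.
have XYE := mulXYE q_neq0 Y_sq YXYE.
have mulrA3 (a b c e : B) : a * b * c * e = a * (b * c * e) by rewrite !mulrA.
have mulrA4 (a b c e f : B) : a * b * c * e * f = a * (b * c * e * f) by rewrite !mulrA.
expand_row.
- exact: mul1r.
- exact: EE.
- exact: EYE.
- exact: XE.
- by rewrite XYE addrC.
- by rewrite -mulrA XE -scalerAr XYE scalerBr !scalerA addrC !mulrA.
- by rewrite mulrA4 YXYE XE.
- by [].
- by rewrite -mulrA EE -scalerAr.
- by rewrite mulrA3 EYE -scalerAr.
- by rewrite -mulrA XE -scalerAr.
- exact: YXYE.
Qed.

Lemma wcomb_eq u v : (forall j, (j < 12)%N -> u j = v j) -> wcomb u = wcomb v.
Proof. by move=> uv; apply: eq_bigr => j _; rewrite uv. Qed.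

Lemma wcombD u v : wcomb u + wcomb v = wcomb (fun j => u j + v j).
Proof. by rewrite /wcomb -big_split; apply: eq_bigr => j _; rewrite scalerDl. Qed.

Lemma wcombZ k v : k *: wcomb v = wcomb (fun j => k * v j).
Proof. by rewrite /wcomb scaler_sumr; apply: eq_bigr => j _; rewrite scalerA. Qed.

Lemma wcomb_basis0 : wcomb (basisv 0) = 1.
Proof. by rewrite /wcomb !big_ord_recl big_ord0 /= scale1r !scale0r !addr0. Qed.

Definition coord_linear (act : (nat -> K) -> nat -> K) :=
  forall v j, (j < 12)%N -> act v j = \sum_(i < 12) v i * act (basisv i) j.

Lemma wcomb_mulr act g :
  (forall i, (i < 12)%N -> word i * g = wcomb (act (basisv i))) -> coord_linear act ->
  forall v, wcomb v * g = wcomb (act v).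
Proof.
move=> word_mul act_lin v; rewrite /wcomb mulr_suml.
transitivity (\sum_(i < 12) \sum_(j < 12) (v i * act (basisv i) j) *: word j).
  apply: eq_bigr => i _; rewrite -scalerAl word_mul // scaler_sumr.
  by apply: eq_bigr => j _; rewrite scalerA.
rewrite exchange_big; apply: eq_bigr => j _.
by rewrite -scaler_suml act_lin.
Qed.

Ltac expand_coords :=
  case=> [|[|[|[|[|[|[|[|[|[|[|[|j]]]]]]]]]]]] // _;
  rewrite !big_ord_recl big_ord0 /= /basisv /=; ring.

Lemma wcomb_mulX v : wcomb v * X = wcomb (actX v).
Proof. by apply: (wcomb_mulr word_mulX) => u; expand_coords. Qed.

Lemma wcomb_mulY v : wcomb v * Y = wcomb (actY v).
Proof. by apply: (wcomb_mulr word_mulY) => u; expand_coords. Qed.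

Lemma wcomb_mulE v : wcomb v * E = wcomb (actE v).
Proof. by apply: (wcomb_mulr word_mulE) => u; expand_coords. Qed.

Definition actR (r0 r1 r2 : K) (v : nat -> K) (j : nat) : K :=
  r0 * v j + r1 * actX v j + r2 * actE v j.

Definition actK (c : K) (v : nat -> K) (j : nat) : K := c * v j + actY v j.

Lemma wcomb_mulR r0 r1 r2 v :
  wcomb v * (r0%:A + r1 *: X + r2 *: E) = wcomb (actR r0 r1 r2 v).
Proof. by rewrite !mulrDr mulr_algr -!scalerAr wcomb_mulX wcomb_mulE !wcombZ !wcombD. Qed.

Lemma wcomb_mulK c v : wcomb v * (c%:A + Y) = wcomb (actK c v).
Proof. by rewrite mulrDr mulr_algr wcomb_mulY wcombZ wcombD. Qed.

Lemma reflection_equation_nondegenerate (t1 t2 : K) :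
  d = q - q^-1 -> d != 0 -> lam != 0 -> q != lam ->
  x * d = d - lam + lam^-1 -> A * (1 - q^-1 * lam) = q1 * x ->
  t2 != 0 -> 1 - t1 ^+ 2 != 0 -> 1 - t2 ^+ 2 != 0 ->
  let Rm := R1 q lam X E in
  let Km t := (t ^+ 2 * q1 / (1 - t ^+ 2))%:A + Y in
  Rm (t1 / t2) * Km t1 * Rm (t1 * t2) * Km t2 = Km t2 * Rm (t1 * t2) * Km t1 * Rm (t1 / t2).
Proof.
move=> d_def d_neq0 lam_neq0 q_neq_lam x_d A_x t2_neq0 t1_sq t2_sq Rm Km.
rewrite /Rm /Km /R1 /= -d_def -[LHS]mul1r -[RHS]mul1r !mulrA.
rewrite -[X in X * _ * _ * _ * _ = _]wcomb_basis0 -[X in _ = X * _ * _ * _ * _]wcomb_basis0.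
rewrite !(wcomb_mulR, wcomb_mulK); apply: wcomb_eq.
have q_lam : q - lam != 0 by rewrite subr_eq0.
have qq1 : q * q - 1 != 0 by rewrite -(mulfV q_neq0) -mulrBr mulf_neq0 // -d_def.
have x_def : x = (d - lam + lam^-1) / d by rewrite -x_d mulfK.
have A_def : A = q1 * x / (1 - q^-1 * lam).
  by rewrite -A_x mulfK // -(mulVf q_neq0) -mulrBr mulf_neq0 ?invr_eq0.
(* [simpl] would also try to reduce the field operations, which is very slow. *)
case=> [|[|[|[|[|[|[|[|[|[|[|[|j]]]]]]]]]]]] // _;
  lazy beta iota delta [actR actK actX actY actE basisv eqn];
  rewrite ?A_def ?x_def ?d_def; field.
all: by rewrite ?q_neq0 ?lam_neq0 ?q_lam ?qq1 ?t2_neq0 ?t1_sq ?t2_sq.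
Qed.

End WordSpan.

Lemma braid_reflection_involution (K : fieldType) (B : algType K) (X Y : B) (c1 c2 : K) :
  X * X = 1 -> X * Y * X * Y = Y * X * Y * X ->
  X * (c1%:A + Y) * X * (c2%:A + Y) = (c2%:A + Y) * X * (c1%:A + Y) * X.
Proof.
move=> X_invol braid.
rewrite !mulrDr !mulrDl !mulr_algr !mulr_algl -!scalerAl !scalerA -[Y * X * X]mulrA.
rewrite !X_invol mul1r mulr1 braid [c2 * c1]mulrC.
by rewrite !addrA [LHS](ACl (1*3*2*4)).
Qed.

Section ReflectionEquation.
Variables (K : fieldType) (B : algType K) (q lam x A q1 : K) (X Y E : B).
Local Notation d := (q - q^-1).
Hypothesis q_neq0 : q != 0.
Hypothesis lam_neq0 : lam != 0.
Hypothesis x_neq0 : x != 0.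
Hypothesis x_d : x * d = d - lam + lam^-1.
Hypothesis A_x : A * (1 - q^-1 * lam) = q1 * x.
Hypothesis X_inv : X * (X - d%:A + d *: E) = 1.
Hypothesis X_sq : X * X = 1 + d *: X - (d * lam) *: E.
Hypothesis XE : X * E = lam *: E.
Hypothesis EX : E * X = lam *: E.
Hypothesis EE : E * E = x *: E.
Hypothesis braid : X * Y * X * Y = Y * X * Y * X.
Hypothesis Y_sq : Y * Y = q1 *: Y + (q^-1)%:A.
Hypothesis YXYE : Y * X * Y * E = E.
Hypothesis EYE : E * Y * E = A *: E.

Lemma reflection_equation (f1 : K -> K) (t1 t2 : K) :
  t2 != 0 -> 1 - t1 ^+ 2 != 0 -> 1 - t2 ^+ 2 != 0 ->
  let Rm := R1 q lam X E in
  let Km := Kmat q1 Y f1 in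
  Rm (t1 / t2) * Km t1 * Rm (t1 * t2) * Km t2 = Km t2 * Rm (t1 * t2) * Km t1 * Rm (t1 / t2).
Proof.
move=> t2_neq0 t1_sq t2_sq Rm Km.
rewrite /Km /Kmat -!scalerAr -!scalerAl !scalerA [f1 t2 * _]mulrC; congr (_ *: _).
have [d0 | d_neq0] := eqVneq d 0.
  have X_invol : X * X = 1 by rewrite X_sq d0 mul0r !scale0r addr0 subr0.
  rewrite /Rm /R1 /= d0 oppr0 !mul0r !scale0r !add0r !addr0 -!scalerAr -!scalerAl !scalerA.
  rewrite [in RHS]mulrC; congr (_ *: _).
  exact: braid_reflection_involution.
have EYXY := mulEYXY d_neq0 lam_neq0 X_sq XE EX EE x_d X_inv braid YXYE.
have q_neq_lam : q != lam.
  apply: contraNneq (mulf_neq0 x_neq0 d_neq0) => q_lam.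
  by rewrite x_d -q_lam; apply/eqP; ring.
exact: (reflection_equation_nondegenerate q_neq0 Y_sq X_sq XE EX EE EYE braid YXYE EYXY).
Qed.

End ReflectionEquation.

HB.instance Definition _ (R : idomainType) :=
  GRing.RMorphism.copy (@embR R) (@FracField.tofrac _ \o polyC \o polyC).

Lemma one_sub_sqr_tofrac_neq0 (R : idomainType) (p : {poly {poly R}}) :
  p.[0].[0] = 0 -> 1 - (FracField.tofrac p : Kt R) ^+ 2 != 0.
Proof.
move=> p00; rewrite -rmorphXn -(rmorph1 (@FracField.tofrac _)) -rmorphB tofrac_eq0.
apply/eqP => /(congr1 (fun r => r.[0].[0])).
by rewrite !hornerE p00 expr0n /= subr0 => /eqP; rewrite oner_eq0.
Qed.

Lemma t2_neq0 (R : idomainType) : t2 R != 0.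
Proof. by rewrite tofrac_eq0 polyX_eq0. Qed.

Theorem proposition20 (R : idomainType) (q lam x q0 A q1 : R)
  (Uq : q \is a GRing.unit) (Ulam : lam \is a GRing.unit)
  (Ux : x \is a GRing.unit) (Uq0 : q0 \is a GRing.unit)
  (Hx : x * (q - q^-1) = (q - q^-1) - lam + lam^-1)
  (Hq0 : q0 = q^-1)
  (HA : A * (1 - q0 * lam) = q1 * x)
  (B : algType (Kt R)) (Y X1 e1 : B)
  (HYinv : exists Yi : B, Y * Yi = 1 /\ Yi * Y = 1)
  (HX1inv : X1 * (X1 - (embR (q - q^-1))%:A + embR (q - q^-1) *: e1) = 1 /\
            (X1 - (embR (q - q^-1))%:A + embR (q - q^-1) *: e1) * X1 = 1)
  (HX1e1 : X1 * e1 = embR lam *: e1) (He1X1 : e1 * X1 = embR lam *: e1)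
  (He1sq : e1 * e1 = embR x *: e1)
  (HX1sq : X1 * X1 = 1 + embR (q - q^-1) *: X1 - embR ((q - q^-1) * lam) *: e1)
  (Hbraid : X1 * Y * X1 * Y = Y * X1 * Y * X1)
  (HYsq : Y * Y = embR q1 *: Y + (embR q0)%:A)
  (HYX1Ye1 : Y * X1 * Y * e1 = e1)
  (He1Ye1 : e1 * Y * e1 = embR A *: e1)
  (He1nz : e1 != 0)
  (Hindep : forall r s : Kt R, r *: e1 + s *: (Y * e1) = 0 -> r = 0 /\ s = 0)
  (f1 : Kt R -> Kt R) :
  let Rm := R1 (embR q) (embR lam) X1 e1 in
  let Km := Kmat (embR q1) Y f1 in
  Rm (t1 R / t2 R) * Km (t1 R) * Rm (t1 R * t2 R) * Km (t2 R)
  = Km (t2 R) * Rm (t1 R * t2 R) * Km (t1 R) * Rm (t1 R / t2 R).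
Proof.
have embR_neq0 (a : R) : a \is a GRing.unit -> embR a != 0.
  by move=> ua; rewrite -unitfE rmorph_unit.
move: (congr1 (@embR R) Hx) (congr1 (@embR R) HA) HX1inv HX1sq HYsq; rewrite Hq0.
rewrite !(rmorphB, rmorphD, rmorphM, rmorph1, rmorphV) // => x_d A_x [X_inv _] X_sq Y_sq.
apply: (reflection_equation (x := embR x) (A := embR A)) => //; try exact: embR_neq0.
- exact: (t2_neq0 R).
- by apply: one_sub_sqr_tofrac_neq0; rewrite !hornerE.
- by apply: one_sub_sqr_tofrac_neq0; rewrite !hornerE.
Qed.
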